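(* Let $A\in\mathbb{R}^{n\times n}$, $B\in\mathbb{R}^{n\times m}$, $0\le\gamma\le1$. Let $(D^*,E^*,d^* )$ be true cost parameters and $(D^\dagger,E^\dagger,d^\dagger)$ falsified cost parameters ($D$'s symmetric positive semidefinite, $E$'s symmetric positive definite, $d$'s in $\mathbb{R}^n$). For each of the two parameter sets, let $P$ be the positive definite solution of $P=D+\gamma A'PA-\gamma^2A'PB(E+\gamma B'PB)^{-1}B'PA$, $K=-\gamma(E+\gamma B'PB)^{-1}B'PA$, $h$ the solution of $h=d+\gamma(A+BK)'h$, and $$k=-\tfrac{\gamma}{2}(E+\gamma B'PB)^{-1}B'h;$$ denote these by $P^*,K^*,h^*,k^*$ for the true parameters and $P^\dagger,K^\dagger,h^\dagger,k^\dagger$ for the falsified ones. Suppose $\|E^\dagger-E^*\|\le\lambda_{\min}(E^* )/2$. Then $$\|k^\dagger-k^*\|\le\Gamma_7\|E^\dagger-E^*\|+\Gamma_8\|P^\dagger-P^*\|+\Gamma_9\|h^\dagger-h^*\|,$$ where $\Gamma_7=\frac{4}{\lambda_{\min}(E^* )}\|k^*\|$, $\Gamma_8=\frac{4\gamma}{\lambda_{\min}(E^* )}\|k^*\|\,\|B\|^2$, and $\Gamma_9=\frac{4\gamma}{\lambda_{\min}(E^* )}\|B\|$.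
   Context: Prime denotes transpose; $\|\cdot\|$ is the Euclidean norm for vectors and spectral norm for matrices; $\lambda_{\min}$ is the smallest eigenvalue. $(K,k)$ characterizes the optimal affine policy $u=Kx+k$ of the discounted LQG problem with dynamics $x_{t+1}=Ax_t+Bu_t+Cw_t$ and stage cost $x'Dx+d'x+r+u'Eu$. *)

From HB Require Import structures.
From mathcomp Require Import all_boot all_order all_algebra.
From mathcomp Require Import boolp classical_sets reals.
Set Implicit Arguments. Unset Strict Implicit. Unset Printing Implicit Defensive.
Import Order.TTheory GRing.Theory Num.Theory.
Local Open Scope ring_scope.
Local Open Scope classical_set_scope.

Section Defs.
Variable R : realType.

Definition vnorm (p : nat) (v : 'cV[R]_p) : R :=
  Num.sqrt (\sum_(i < p) v i 0 ^+ 2).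

Definition snorm (p q : nat) (M : 'M[R]_(p, q)) : R :=
  sup [set vnorm (M *m x) | x in [set x : 'cV[R]_q | vnorm x = 1]].

Definition lambda_min (p : nat) (M : 'M[R]_p) : R :=
  inf [set l : R | exists2 v : 'cV[R]_p, v != 0 & M *m v = l *: v].

Definition sym_psd (p : nat) (M : 'M[R]_p) : Prop :=
  M^T = M /\ forall x : 'cV[R]_p, 0 <= (x^T *m M *m x) 0 0.

Definition sym_pd (p : nat) (M : 'M[R]_p) : Prop :=
  M^T = M /\ forall x : 'cV[R]_p, x != 0 -> 0 < (x^T *m M *m x) 0 0.

Variables (n m : nat) (A : 'M[R]_n) (B : 'M[R]_(n, m)) (gamma : R).

Definition Gmat (E : 'M[R]_m) (P : 'M[R]_n) : 'M[R]_m :=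
  E + gamma *: (B^T *m P *m B).

Definition riccati (D : 'M[R]_n) (E : 'M[R]_m) (P : 'M[R]_n) : Prop :=
  P = D + gamma *: (A^T *m P *m A)
        - gamma ^+ 2 *: (A^T *m P *m B *m invmx (Gmat E P) *m B^T *m P *m A).

Definition gainK (E : 'M[R]_m) (P : 'M[R]_n) : 'M[R]_(m, n) :=
  - (gamma *: (invmx (Gmat E P) *m B^T *m P *m A)).

Definition h_eq (E : 'M[R]_m) (P : 'M[R]_n) (d h : 'cV[R]_n) : Prop :=
  h = d + gamma *: ((A + B *m gainK E P)^T *m h).

Definition offset_k (E : 'M[R]_m) (P : 'M[R]_n) (h : 'cV[R]_n) : 'cV[R]_m :=
  - ((gamma / 2) *: (invmx (Gmat E P) *m B^T *m h)).

End Defs.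

(* Write G = E + gamma B'PB, so that the offsets solve G k = -(gamma/2) B'h and
     G†(k† - k* ) = -(gamma/2) B'(h† - h* ) - (G† - G* ) k*,
   with |G† - G*| <= |E† - E*| + gamma |B|^2 |P† - P*|.  As P† is positive
   semidefinite, z'G†z >= (lambda_min(E* ) - |E† - E*|) |z|^2 >= lambda_min(E* )/2 |z|^2,
   hence |G†z| >= lambda_min(E* )/2 |z|, which yields the bound (even with 2 instead
   of 4).  To use lambda_min, it is identified with
   the infimum mu of x'Ex on the unit sphere: otherwise E - mu I would be invertible
   and positive semidefinite, hence coercive, contradicting the choice of mu. *)

From HB Require Import structures.
From mathcomp Require Import all_boot all_order all_algebra.
From mathcomp Require Import boolp classical_sets reals.
From mathcomp Require Import ring lra.
Import Order.TTheory GRing.Theory Num.Theory.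
Local Open Scope ring_scope.
Local Open Scope classical_set_scope.

Set Implicit Arguments.
Unset Strict Implicit.
Unset Printing Implicit Defensive.

Definition dot (R : pzRingType) p (u v : 'cV[R]_p) : R := (u^T *m v) 0 0.

Definition quad (R : pzRingType) p (M : 'M[R]_p) (x : 'cV[R]_p) : R := (x^T *m M *m x) 0 0.

Section DotProduct.
Variables (R : comPzRingType) (p : nat).
Implicit Types (u v w x y : 'cV[R]_p) (M N : 'M[R]_p).

Lemma dot_sum u v : dot u v = \sum_i u i 0 * v i 0.
Proof. by rewrite /dot mxE; apply: eq_bigr => i _; rewrite mxE. Qed.

Lemma dotC u v : dot u v = dot v u.
Proof. by rewrite !dot_sum; apply: eq_bigr => i _; rewrite mulrC. Qed.

Lemma dotDr u v w : dot u (v + w) = dot u v + dot u w.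
Proof. by rewrite /dot mulmxDr mxE. Qed.

Lemma dotZr a u v : dot u (a *: v) = a * dot u v.
Proof. by rewrite /dot -scalemxAr mxE. Qed.

Lemma dotBr u v w : dot u (v - w) = dot u v - dot u w.
Proof. by rewrite -scaleN1r dotDr dotZr mulN1r. Qed.

Lemma dotDl u v w : dot (u + v) w = dot u w + dot v w.
Proof. by rewrite dotC dotDr !(dotC w). Qed.

Lemma dotBl u v w : dot (u - v) w = dot u w - dot v w.
Proof. by rewrite dotC dotBr !(dotC w). Qed.

Lemma dotZl a u v : dot (a *: u) v = a * dot u v.
Proof. by rewrite dotC dotZr dotC. Qed.

Lemma dotmx0 u : dot u 0 = 0.
Proof. by rewrite /dot mulmx0 mxE. Qed.

Lemma dot_trmx q (M : 'M[R]_(p, q)) x (z : 'cV[R]_q) : dot x (M *m z) = dot (M^T *m x) z.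
Proof. by rewrite /dot trmx_mul trmxK mulmxA. Qed.

Lemma quadE M x : quad M x = dot x (M *m x).
Proof. by rewrite /quad /dot mulmxA. Qed.

Lemma quadZ M a x : quad M (a *: x) = a ^+ 2 * quad M x.
Proof. by rewrite !quadE -scalemxAr dotZl dotZr mulrA -expr2. Qed.

Lemma quadDl M N x : quad (M + N) x = quad M x + quad N x.
Proof. by rewrite !quadE mulmxDl dotDr. Qed.

Lemma quad_subZ N x y t : N^T = N ->
  quad N (x - t *: y) = quad N x - 2 * t * dot (N *m x) y + t ^+ 2 * quad N y.
Proof.
move=> NT; rewrite !quadE mulmxBr -scalemxAr.
rewrite !(dotBl, dotBr, dotZl, dotZr) (dot_trmx N x y) NT (dotC y); ring.
Qed.

End DotProduct.

Section DotProductNonneg.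
Variables (R : realDomainType) (p : nat).
Implicit Types u : 'cV[R]_p.

Lemma dotxx_ge0 u : 0 <= dot u u.
Proof. by rewrite dot_sum sumr_ge0 // => i _; rewrite -expr2 sqr_ge0. Qed.

Lemma dotxx_eq0 u : (dot u u == 0) = (u == 0).
Proof.
apply/idP/eqP => [|->]; last by rewrite dotmx0.
rewrite dot_sum psumr_eq0 => [/allP u0|i _]; last by rewrite -expr2 sqr_ge0.
apply/matrixP => i j; rewrite (ord1 j) mxE.
by have /(_ (mem_index_enum i)) := u0 i; rewrite mulf_eq0 orbb => /eqP.
Qed.

End DotProductNonneg.

Lemma discriminant_le (R : realFieldType) (a b c : R) :
  0 <= c -> (forall t, 0 <= a - 2 * t * b + t ^+ 2 * c) -> b ^+ 2 <= a * c.
Proof.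
rewrite le_eqVlt => /predU1P[c0 | c_gt0] H.
  rewrite -c0 mulr0; suff -> : b = 0 by rewrite expr0n.
  apply/eqP; apply: contraT => b_neq0.
  have := H ((a + 1) / (2 * b)); rewrite -c0 mulr0 addr0.
  by rewrite [_ * b](_ : _ = a + 1); [lra | field; rewrite b_neq0].
have := H (b / c).
rewrite [X in 0 <= X -> _](_ : _ = (a * c - b ^+ 2) / c); last by field; rewrite gt_eqF.
by rewrite pmulr_lge0 ?invr_gt0 // subr_ge0.
Qed.

Lemma dot_sqr_le (R : realFieldType) p (u v : 'cV[R]_p) : dot u v ^+ 2 <= dot u u * dot v v.
Proof.
apply: discriminant_le => [|t]; first exact: dotxx_ge0.
have -> : dot u u - 2 * t * dot u v + t ^+ 2 * dot v v = dot (u - t *: v) (u - t *: v).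
  by rewrite !(dotBl, dotBr, dotZl, dotZr) (dotC v u); ring.
exact: dotxx_ge0.
Qed.

Section EuclideanNorm.
Variables (R : realType) (p : nat).
Implicit Types u v : 'cV[R]_p.

Lemma vnorm_ge0 v : 0 <= vnorm v.
Proof. exact: sqrtr_ge0. Qed.

Lemma vnorm_sq v : vnorm v ^+ 2 = dot v v.
Proof.
rewrite sqr_sqrtr ?dot_sum; last by apply: sumr_ge0 => i _; apply: sqr_ge0.
by apply: eq_bigr => i _; rewrite expr2.
Qed.

Lemma vnormE v : vnorm v = Num.sqrt (dot v v).
Proof. by rewrite -vnorm_sq sqrtr_sqr ger0_norm ?vnorm_ge0. Qed.

Lemma vnorm_eq0 v : (vnorm v == 0) = (v == 0).
Proof. by rewrite -sqrf_eq0 vnorm_sq dotxx_eq0. Qed.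

Lemma vnorm_gt0 v : (0 < vnorm v) = (v != 0).
Proof. by rewrite lt_def vnorm_eq0 vnorm_ge0 andbT. Qed.

Lemma vnorm0 : vnorm (0 : 'cV[R]_p) = 0.
Proof. by apply/eqP; rewrite vnorm_eq0. Qed.

Lemma vnormZ a v : vnorm (a *: v) = `|a| * vnorm v.
Proof. by rewrite !vnormE dotZl dotZr mulrA -expr2 sqrtrM ?sqr_ge0 // sqrtr_sqr. Qed.

Lemma vnormN v : vnorm (- v) = vnorm v.
Proof. by rewrite -scaleN1r vnormZ normrN normr1 mul1r. Qed.

Lemma vnorm_normalize v : v != 0 -> vnorm ((vnorm v)^-1 *: v) = 1.
Proof.
by rewrite -vnorm_gt0 => v_gt0; rewrite vnormZ ger0_norm ?invr_ge0 ?vnorm_ge0 ?mulVf ?gt_eqF.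
Qed.

Lemma normr_dot_le u v : `|dot u v| <= vnorm u * vnorm v.
Proof.
rewrite -(ler_pXn2r (_ : 0 < 2)%N) ?nnegrE ?mulr_ge0 ?vnorm_ge0 //.
by rewrite real_normK ?num_real // exprMn !vnorm_sq dot_sqr_le.
Qed.

Lemma vnormD u v : vnorm (u + v) <= vnorm u + vnorm v.
Proof.
rewrite -(ler_pXn2r (_ : 0 < 2)%N) ?nnegrE ?addr_ge0 ?vnorm_ge0 //.
rewrite vnorm_sq dotDl !dotDr sqrrD !vnorm_sq (dotC v u).
by have := ler_norm (dot u v); have := normr_dot_le u v; lra.
Qed.

End EuclideanNorm.

Section SpectralNorm.
Variables (R : realType) (p q : nat).
Implicit Types (M : 'M[R]_(p, q)) (x : 'cV[R]_q) (v : 'cV[R]_p).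

Lemma vnorm_mulmx_sqr_le M x :
  vnorm (M *m x) ^+ 2 <= (\sum_i vnorm (row i M)^T ^+ 2) * vnorm x ^+ 2.
Proof.
rewrite vnorm_sq dot_sum mulr_suml; apply: ler_sum => i _.
have -> : (M *m x) i 0 = dot (row i M)^T x.
  by rewrite dot_sum mxE; apply: eq_bigr => j _; rewrite !mxE.
by rewrite -expr2 !vnorm_sq dot_sqr_le.
Qed.

Lemma snorm_has_ubound M :
  has_ubound [set vnorm (M *m x) | x in [set x | vnorm x = 1]].
Proof.
exists (Num.sqrt (\sum_i vnorm (row i M)^T ^+ 2)) => _ [x /= x1 <-].
rewrite -[vnorm _]ger0_norm ?vnorm_ge0 // -sqrtr_sqr ler_wsqrtr //.
by have := vnorm_mulmx_sqr_le M x; rewrite x1 expr1n mulr1.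
Qed.

Lemma vnorm_mulmx_le M x : vnorm (M *m x) <= snorm M * vnorm x.
Proof.
have [-> | x_neq0] := eqVneq x 0; first by rewrite mulmx0 !vnorm0 mulr0.
have x_gt0 : 0 < vnorm x by rewrite vnorm_gt0.
have : vnorm (M *m ((vnorm x)^-1 *: x)) <= snorm M.
  apply: (ub_le_sup (snorm_has_ubound M)).
  by exists ((vnorm x)^-1 *: x) => //; apply: vnorm_normalize.
rewrite -scalemxAr vnormZ ger0_norm ?invr_ge0 ?vnorm_ge0 // => Mx_le.
by rewrite -ler_pdivrMr // mulrC.
Qed.

Lemma snorm_ge0 M : 0 <= snorm M.
Proof.
have [S0 | /set0P[_ [x x1 _]]] :=
  eqVneq [set vnorm (M *m x) | x in [set x | vnorm x = 1]] set0.
  by rewrite /snorm S0 sup0.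
apply: le_trans (vnorm_ge0 (M *m x)) _.
by apply: (ub_le_sup (snorm_has_ubound M)); exists x.
Qed.

Lemma vnorm_trmx_mulmx_le M v : vnorm (M^T *m v) <= snorm M * vnorm v.
Proof.
set w := M^T *m v.
have [-> | w_neq0] := eqVneq w 0; first by rewrite vnorm0 mulr_ge0 ?snorm_ge0 ?vnorm_ge0.
have : vnorm w ^+ 2 <= snorm M * vnorm v * vnorm w.
  rewrite vnorm_sq {1}/w -dot_trmx; apply: le_trans (ler_norm _) _.
  apply: le_trans (normr_dot_le _ _) _.
  by rewrite (mulrC (snorm M)) -mulrA ler_wpM2l ?vnorm_ge0 ?vnorm_mulmx_le.
by rewrite expr2 ler_pM2r ?vnorm_gt0.
Qed.

End SpectralNorm.

Section QuadraticForms.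
Variables (R : realType) (p : nat).
Implicit Types (M N E F : 'M[R]_p) (x v : 'cV[R]_p).

Lemma normr_quad_le M x : `|quad M x| <= snorm M * vnorm x ^+ 2.
Proof.
rewrite quadE; apply: le_trans (normr_dot_le _ _) _; rewrite mulrC expr2 mulrA.
by rewrite ler_wpM2r ?vnorm_ge0 ?vnorm_mulmx_le.
Qed.

Lemma quad_ge_perturb E F c x : c * vnorm x ^+ 2 <= quad F x ->
  (c - snorm (E - F)) * vnorm x ^+ 2 <= quad E x.
Proof.
have -> : quad E x = quad F x + quad (E - F) x by rewrite -quadDl addrC subrK.
have := normr_quad_le (E - F) x; rewrite ler_norml mulrBl => /andP[+ _]; lra.
Qed.

Lemma quad0 M : quad M 0 = 0.
Proof. by rewrite quadE mulmx0 dotmx0. Qed.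

Lemma quad_eigen M v l : M *m v = l *: v -> quad M v = l * vnorm v ^+ 2.
Proof. by move=> Mv; rewrite quadE Mv dotZr vnorm_sq. Qed.

Lemma sym_pd_quad_ge0 M x : sym_pd M -> 0 <= quad M x.
Proof.
case=> _ M_pd; have [-> | /M_pd/ltW //] := eqVneq x 0.
by rewrite quad0.
Qed.

(* Cauchy-Schwarz for the semi-inner product x'Ny, applied to y = Nx. *)
Lemma vnorm_mulmx_sqr_le_quad N x : N^T = N -> (forall y, 0 <= quad N y) ->
  vnorm (N *m x) ^+ 2 <= snorm N * quad N x.
Proof.
move=> NT N_psd; set y := N *m x; rewrite vnorm_sq.
have CS : dot y y ^+ 2 <= quad N x * quad N y.
  apply: discriminant_le => [|t]; first exact: N_psd.
  by have := N_psd (x - t *: y); rewrite quad_subZ.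
have Ny : quad N y <= snorm N * dot y y.
  by rewrite -vnorm_sq (le_trans (ler_norm _) (normr_quad_le _ _)).
have := N_psd x; have := dotxx_ge0 y; have := snorm_ge0 N.
have [-> | y_neq0] := eqVneq y 0; first by rewrite dotmx0; nra.
have : 0 < dot y y by rewrite -vnorm_sq exprn_gt0 ?vnorm_gt0.
nra.
Qed.

Lemma unitmx_coercive N : N^T = N -> (forall x, 0 <= quad N x) -> N \in unitmx ->
  exists2 c, 0 < c & forall x, c * vnorm x ^+ 2 <= quad N x.
Proof.
move=> NT N_psd N_unit; set C := snorm (invmx N) ^+ 2 * snorm N + 1.
have C_gt0 : 0 < C by rewrite ltr_wpDl ?mulr_ge0 ?exprn_ge0 ?snorm_ge0.
exists C^-1 => [|x]; first by rewrite invr_gt0.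
rewrite mulrC ler_pdivrMr //.
have : vnorm x ^+ 2 <= snorm (invmx N) ^+ 2 * vnorm (N *m x) ^+ 2.
  rewrite -exprMn lerXn2r ?nnegrE ?mulr_ge0 ?snorm_ge0 ?vnorm_ge0 //.
  by rewrite -{1}(mulKmx N_unit x) vnorm_mulmx_le.
have := vnorm_mulmx_sqr_le_quad x NT N_psd; have := N_psd x.
have := snorm_ge0 N; have := exprn_ge0 2 (snorm_ge0 (invmx N)).
rewrite /C; nra.
Qed.

End QuadraticForms.

Section SmallestEigenvalue.
Variables (R : realType) (p : nat).
Implicit Types (M N : 'M[R]_p) (x v : 'cV[R]_p).

Definition rayleigh_min M : R := inf [set quad M x | x in [set x | vnorm x = 1]].

Lemma rayleigh_has_lbound M : has_lbound [set quad M x | x in [set x | vnorm x = 1]].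
Proof.
exists (- snorm M) => _ [x /= x1 <-].
by have := normr_quad_le M x; rewrite x1 expr1n mulr1 ler_norml => /andP[].
Qed.

Lemma rayleigh_min_le_quad M x : rayleigh_min M * vnorm x ^+ 2 <= quad M x.
Proof.
have [-> | x_neq0] := eqVneq x 0; first by rewrite vnorm0 expr0n /= mulr0 quad0.
have x_gt0 : 0 < vnorm x ^+ 2 by rewrite exprn_gt0 ?vnorm_gt0.
have : rayleigh_min M <= quad M ((vnorm x)^-1 *: x).
  apply: (ge_inf (rayleigh_has_lbound M)).
  by exists ((vnorm x)^-1 *: x) => //; apply: vnorm_normalize.
by rewrite quadZ exprVn mulrC ler_pdivlMr.
Qed.

Lemma exists_vnorm_eq1 : (0 < p)%N -> exists x : 'cV[R]_p, vnorm x = 1.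
Proof.
move=> p_gt0; pose e : 'cV[R]_p := delta_mx (Ordinal p_gt0) 0.
have e_neq0 : e != 0.
  apply/negP => /eqP/matrixP/(_ (Ordinal p_gt0) 0).
  by rewrite !mxE !eqxx /=; apply/eqP; apply: oner_neq0.
by exists ((vnorm e)^-1 *: e); apply: vnorm_normalize.
Qed.

Lemma nonunitmx_ker N : N \notin unitmx -> exists2 v : 'cV[R]_p, v != 0 & N *m v = 0.
Proof.
rewrite unitmxE unitfE negbK -det_tr => /det0P[w w_neq0 wN].
exists w^T; first by rewrite trmx_eq0.
by apply: trmx_inj; rewrite trmx_mul trmxK wN trmx0.
Qed.

Lemma rayleigh_min_eigen M : M^T = M -> (0 < p)%N ->
  exists2 v : 'cV[R]_p, v != 0 & M *m v = rayleigh_min M *: v.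
Proof.
move=> MT p_gt0; set mu := rayleigh_min M; set N := M - mu *: 1%:M.
have quadN x : quad N x = quad M x - mu * vnorm x ^+ 2.
  by rewrite !quadE mulmxBl -scalemxAl mul1mx dotBr dotZr vnorm_sq.
have N_psd x : 0 <= quad N x by rewrite quadN subr_ge0 rayleigh_min_le_quad.
have NT : N^T = N by rewrite /N linearB /= linearZ /= trmx1 MT.
have [N_unit | /nonunitmx_ker[v v_neq0 Nv]] := boolP (N \in unitmx); last first.
  exists v => //; apply/eqP; rewrite -subr_eq0.
  by move: Nv; rewrite mulmxBl -scalemxAl mul1mx => ->.
have [c c_gt0 N_coercive] := unitmx_coercive NT N_psd N_unit.
have [x0 x0_1] := exists_vnorm_eq1 p_gt0.
suff : mu + c <= mu by rewrite gerDl leNgt c_gt0.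
apply: lb_le_inf => [|_ [x /= x1 <-]]; first by exists (quad M x0), x0.
by have := N_coercive x; rewrite quadN x1 expr1n !mulr1; lra.
Qed.

Lemma lambda_min_rayleigh M : M^T = M -> (0 < p)%N -> lambda_min M = rayleigh_min M.
Proof.
move=> MT p_gt0; have [v v_neq0 Mv] := rayleigh_min_eigen MT p_gt0.
have mu_lb : lbound [set l | exists2 v : 'cV[R]_p, v != 0 & M *m v = l *: v] (rayleigh_min M).
  move=> l [w w_neq0 Mw]; have := rayleigh_min_le_quad M w.
  by rewrite (quad_eigen Mw) ler_pM2r // exprn_gt0 ?vnorm_gt0.
apply/le_anti/andP; split.
  by apply: (ge_inf (ex_intro _ _ mu_lb)); exists v.
by apply: lb_le_inf mu_lb; exists (rayleigh_min M), v.
Qed.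

Lemma lambda_min_le_quad M x : M^T = M -> (0 < p)%N ->
  lambda_min M * vnorm x ^+ 2 <= quad M x.
Proof. by move=> MT p_gt0; rewrite lambda_min_rayleigh ?rayleigh_min_le_quad. Qed.

Lemma lambda_min_gt0 M : sym_pd M -> (0 < p)%N -> 0 < lambda_min M.
Proof.
move=> [MT M_pd] p_gt0; rewrite lambda_min_rayleigh //.
have [v v_neq0 Mv] := rayleigh_min_eigen MT p_gt0.
have := M_pd v v_neq0; rewrite -/(quad M v) (quad_eigen Mv).
by rewrite pmulr_lgt0 // exprn_gt0 ?vnorm_gt0.
Qed.

Lemma lambda_min_ge0 M : sym_pd M -> 0 <= lambda_min M.
Proof.
move=> [_ M_pd]; rewrite /lambda_min; set S := [set l | _].
have [-> | S_neq0] := eqVneq S set0; first by rewrite inf0.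
apply: lb_le_inf => [|l [v v_neq0 Mv]]; first exact/set0P.
have := M_pd v v_neq0; rewrite -/(quad M v) (quad_eigen Mv).
by rewrite pmulr_lgt0 ?exprn_gt0 ?vnorm_gt0 // => /ltW.
Qed.

End SmallestEigenvalue.

Section Coercivity.
Variables (R : realType) (p : nat).
Implicit Types (G : 'M[R]_p) (z : 'cV[R]_p).

Lemma vnorm_mulmx_ge G c z : c * vnorm z ^+ 2 <= quad G z -> c * vnorm z <= vnorm (G *m z).
Proof.
have [-> | z_neq0] := eqVneq z 0; first by rewrite vnorm0 mulr0 vnorm_ge0.
rewrite quadE expr2 mulrA => /le_trans/(_ (le_trans (ler_norm _) (normr_dot_le _ _))).
by rewrite mulrC ler_pM2l ?vnorm_gt0.
Qed.

Lemma coercive_unitmx G c : 0 < c -> (forall z, c * vnorm z ^+ 2 <= quad G z) ->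
  G \in unitmx.
Proof.
move=> c_gt0 G_coercive; rewrite -unitmx_tr -row_free_unit; apply: inj_row_free => v vG0.
have Gv0 : G *m v^T = 0 by apply: trmx_inj; rewrite trmx_mul trmxK vG0 trmx0.
have := vnorm_mulmx_ge (G_coercive v^T); rewrite Gv0 vnorm0 pmulr_rle0 //.
by move=> vT_le0; apply/eqP; rewrite -trmx_eq0 -vnorm_eq0 eq_le vT_le0 vnorm_ge0.
Qed.

Lemma vnorm_sub_solutions_le Gs Gd (ks kd us ud : 'cV[R]_p) c :
  (forall z, c * vnorm z <= vnorm (Gd *m z)) -> Gs *m ks = us -> Gd *m kd = ud ->
  c * vnorm (kd - ks) <= vnorm (ud - us) + vnorm ((Gd - Gs) *m ks).
Proof.
move=> Gd_ge Gsks Gdkd; apply: le_trans (Gd_ge _) _.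
have -> : Gd *m (kd - ks) = (ud - us) - (Gd - Gs) *m ks.
  by rewrite mulmxBr mulmxBl Gdkd Gsks opprB addrA subrK.
by rewrite (le_trans (vnormD _ _)) // vnormN.
Qed.

End Coercivity.

Section OffsetGain.
Variables (R : realType) (n m : nat) (B : 'M[R]_(n, m)) (gamma : R).
Implicit Types (E : 'M[R]_m) (P : 'M[R]_n) (h : 'cV[R]_n) (z : 'cV[R]_m).

Lemma quad_Gmat E P z : quad (Gmat B gamma E P) z = quad E z + gamma * quad P (B *m z).
Proof.
by rewrite /Gmat quadDl !quadE -scalemxAl dotZr -!mulmxA (dot_trmx B^T) trmxK.
Qed.

Lemma Gmat_coercive E P c z : 0 <= gamma -> (forall x, 0 <= quad P x) ->
  c * vnorm z ^+ 2 <= quad E z -> c * vnorm z ^+ 2 <= quad (Gmat B gamma E P) z.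
Proof.
by move=> gamma_ge0 P_psd /le_trans; apply; rewrite quad_Gmat lerDl mulr_ge0.
Qed.

Lemma Gmat_offset_k E P h : Gmat B gamma E P \in unitmx ->
  Gmat B gamma E P *m offset_k B gamma E P h = - ((gamma / 2) *: (B^T *m h)).
Proof. by move=> G_unit; rewrite /offset_k mulmxN -scalemxAr -!mulmxA mulKVmx. Qed.

Lemma vnorm_Gmat_sub_mulmx_le Es Ed Ps Pd z : 0 <= gamma ->
  vnorm ((Gmat B gamma Ed Pd - Gmat B gamma Es Ps) *m z) <=
  (snorm (Ed - Es) + gamma * snorm B ^+ 2 * snorm (Pd - Ps)) * vnorm z.
Proof.
move=> gamma_ge0.
have -> : Gmat B gamma Ed Pd - Gmat B gamma Es Ps =
    (Ed - Es) + gamma *: (B^T *m (Pd - Ps) *m B).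
  by rewrite /Gmat opprD addrACA -scalerBr -mulmxBl -mulmxBr.
rewrite mulmxDl mulrDl; apply: le_trans (vnormD _ _) _.
rewrite lerD ?vnorm_mulmx_le // -scalemxAl vnormZ ger0_norm // -!mulrA ler_wpM2l //.
rewrite -!mulmxA; apply: le_trans (vnorm_trmx_mulmx_le _ _) _.
rewrite ler_wpM2l ?snorm_ge0 //; apply: le_trans (vnorm_mulmx_le _ _) _.
by rewrite mulrCA ler_wpM2l ?snorm_ge0 ?vnorm_mulmx_le.
Qed.

Lemma offset_k_sub_le Es Ed Ps Pd hs hd l :
  0 <= gamma -> 0 < l -> (forall z, l * vnorm z ^+ 2 <= quad Es z) ->
  snorm (Ed - Es) <= l / 2 ->
  (forall x, 0 <= quad Ps x) -> (forall x, 0 <= quad Pd x) ->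
  l / 2 * vnorm (offset_k B gamma Ed Pd hd - offset_k B gamma Es Ps hs) <=
    gamma / 2 * snorm B * vnorm (hd - hs) + (snorm (Ed - Es)
    + gamma * snorm B ^+ 2 * snorm (Pd - Ps)) * vnorm (offset_k B gamma Es Ps hs).
Proof.
move=> gamma_ge0 l_gt0 Es_coercive sE_le Ps_psd Pd_psd.
have Gs_unit : Gmat B gamma Es Ps \in unitmx.
  by apply: (coercive_unitmx l_gt0) => z; apply: Gmat_coercive.
have Gd_coercive z : l / 2 * vnorm z ^+ 2 <= quad (Gmat B gamma Ed Pd) z.
  apply: Gmat_coercive => //; apply: le_trans (quad_ge_perturb Ed (Es_coercive z)).
  by rewrite ler_wpM2r ?exprn_ge0 ?vnorm_ge0 //; lra.
have Gd_unit := coercive_unitmx (divr_gt0 l_gt0 (ltr0Sn _ 1)) Gd_coercive.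
apply: le_trans (vnorm_sub_solutions_le (fun z => vnorm_mulmx_ge (Gd_coercive z))
  (Gmat_offset_k hs Gs_unit) (Gmat_offset_k hd Gd_unit)) _.
rewrite lerD ?vnorm_Gmat_sub_mulmx_le // -opprD vnormN -scalerBr -mulmxBr vnormZ.
by rewrite ger0_norm ?divr_ge0 // -mulrA ler_wpM2l ?divr_ge0 ?vnorm_trmx_mulmx_le.
Qed.

End OffsetGain.

Theorem theorem2 (R : realType) (n m : nat) (A : 'M[R]_n) (B : 'M[R]_(n, m))
  (gamma : R) (Ds Dd : 'M[R]_n) (Es Ed : 'M[R]_m) (ds dd : 'cV[R]_n)
  (Ps Pd : 'M[R]_n) (hs hd : 'cV[R]_n) :
  0 <= gamma -> gamma <= 1 ->
  sym_psd Ds -> sym_psd Dd -> sym_pd Es -> sym_pd Ed ->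
  sym_pd Ps -> riccati A B gamma Ds Es Ps ->
  sym_pd Pd -> riccati A B gamma Dd Ed Pd ->
  h_eq A B gamma Es Ps ds hs ->
  h_eq A B gamma Ed Pd dd hd ->
  snorm (Ed - Es) <= lambda_min Es / 2 ->
  let ks := offset_k B gamma Es Ps hs in
  let kd := offset_k B gamma Ed Pd hd in
  vnorm (kd - ks) <=
    (4 / lambda_min Es * vnorm ks) * snorm (Ed - Es)
  + (4 * gamma / lambda_min Es * vnorm ks * snorm B ^+ 2) * snorm (Pd - Ps)
  + (4 * gamma / lambda_min Es * snorm B) * vnorm (hd - hs).
Proof.
move=> gamma_ge0 _ _ _ Es_pd _ Ps_pd _ Pd_pd _ _ _ sE_le; cbv zeta.
have [m0 | m_gt0] := posnP m.
  subst m; have l_ge0 := lambda_min_ge0 Es_pd.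
  rewrite [X in vnorm X <= _]flatmx0 vnorm0.
  by rewrite !addr_ge0 ?mulr_ge0 ?invr_ge0 ?exprn_ge0 ?vnorm_ge0 ?snorm_ge0.
have l_gt0 := lambda_min_gt0 Es_pd m_gt0.
have := offset_k_sub_le B hs hd gamma_ge0 l_gt0
  (fun z => lambda_min_le_quad z Es_pd.1 m_gt0) sE_le
  (fun x => sym_pd_quad_ge0 x Ps_pd) (fun x => sym_pd_quad_ge0 x Pd_pd).
set l := lambda_min Es; set a := vnorm (offset_k B gamma Es Ps hs).
set sE := snorm (Ed - Es); set sP := snorm (Pd - Ps); set sB := snorm B.
set vh := vnorm (hd - hs) => key.
rewrite -(ler_pM2l (divr_gt0 l_gt0 (ltr0Sn _ 1))); apply: (le_trans key).
have -> : l / 2 * (4 / l * a * sE + 4 * gamma / l * a * sB ^+ 2 * sP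
    + 4 * gamma / l * sB * vh) = 2 * (a * sE + gamma * a * sB ^+ 2 * sP + gamma * sB * vh).
  by field; apply: lt0r_neq0.
have : 0 <= a * sE by rewrite mulr_ge0 ?vnorm_ge0 ?snorm_ge0.
have : 0 <= gamma * a * sB ^+ 2 * sP by rewrite !mulr_ge0 ?exprn_ge0 ?vnorm_ge0 ?snorm_ge0.
have : 0 <= gamma * sB * vh by rewrite !mulr_ge0 ?vnorm_ge0 ?snorm_ge0.
lra.
Qed.
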